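(* Let $X$ be a Polish space, $n\ge1$, $\mu\in\mathcal M_f(X)$ with $\mu(X)=n$, and let ${\mathbf T}$ be a thinning kernel of type 1 with normalization $Z$. Then for every non-negative measurable function $\phi$ on $\mathcal M_f(X)$, $${\mathbf T}_\mu\big(\phi\,1_{\{\zeta_X=n-1\}}\big)=\int\frac{Z_\mu}{Z_{\mu-\delta_x}}\,{\mathbf T}_{\mu-\delta_x}\big(\phi\,1_{\{\zeta_X=n-1\}}\big)\,\mu(\mathrm dx).$$
   Context: $\mathcal M_f(X)$ denotes the set of finite counting measures on $X$. For $\mu\in\mathcal M_f(X)$ with an atom at $x$, $\mu-\delta_x$ is $\mu$ with one atom at $x$ removed. $\zeta_X(\eta)=\eta(X)$ is the total number of points. $\mu^{-[n]}$ is the $n$-th falling factorial measure of $\mu$, defined by $\int g\,\mathrm d\mu^{-[n]}=\int\cdots\int g(x_1,\dots,x_n)(\mu-\delta_{x_1}-\dots-\delta_{x_{n-1}})(\mathrm dx_n)\cdots\mu(\mathrm dx_1)$. Write $\delta_{\mathbf x}=\delta_{x_1}+\dots+\delta_{x_n}$. A thinning kernel of type 1 is a stochastic kernel of the form ${\mathbf T}_\mu(\phi)=Z_\mu\sum_{m\ge0}\frac1{m!}\int\phi(\delta_{\mathbf x})\,t({\mathbf x})\,\mu^{-[m]}(\mathrm d{\mathbf x})$. Here $t\ge0$ is a symmetric measurable function on $\bigcup_mX^m$ (for $m=0$ a non-negative number) not depending on $\mu$, and $Z_\mu^{-1}=\sum_m\frac1{m!}\int t\,\mathrm d\mu^{-[m]}\in(0,\infty)$.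 *)

From HB Require Import structures.
From mathcomp Require Import all_boot all_order all_algebra.
From mathcomp Require Import all_classical all_reals.
From mathcomp Require Import ereal sequences.
From Stdlib Require Export Permutation.

Set Implicit Arguments.
Unset Strict Implicit.
Unset Printing Implicit Defensive.

Import Order.TTheory GRing.Theory Num.Theory.
Local Open Scope ring_scope.
Local Open Scope ereal_scope.

(* A finite counting measure on X is represented by the list of its atoms,
   repeated according to multiplicity; two lists represent the same measure
   iff they are permutations of each other.  [delta_x1 + ... + delta_xm] is
   thus represented by [x1; ...; xm], and zeta_X(eta) = size eta. *)

Fixpoint picks (X : Type) (s : seq X) : seq (X * seq X) :=
  match s with
  | [::] => [::]
  | x :: s' => (x, s') :: [seq (p.1, x :: p.2) | p <- picks s']
  end.

(* Integral against the n-th falling factorial measure mu^{-[n]}, defined by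
   the iterated integral of the paper:
   int g dmu^{-[m]} = int ... int g(x1,..,xm)
        (mu - d_x1 - ... - d_x(m-1))(dx_m) ... mu(dx_1),
   where integration against a counting measure is the sum over its atoms. *)
Fixpoint ffint (R : realType) (X : Type) (m : nat) (mu : seq X)
    (g : seq X -> \bar R) : \bar R :=
  match m with
  | 0 => g [::]
  | m'.+1 => \sum_(p <- picks mu) ffint m' p.2 (fun xs => g (p.1 :: xs))
  end.

Definition Zinv (R : realType) (X : Type) (t : seq X -> R) (mu : seq X)
  : \bar R :=
  \sum_(0 <= m <oo) ((m`!%:R)^-1)%:E * ffint m mu (fun xs => (t xs)%:E).

Definition Znorm (R : realType) (X : Type) (t : seq X -> R) (mu : seq X) : R :=
  (fine (Zinv t mu))^-1.

Definition Tker (R : realType) (X : Type) (t : seq X -> R) (mu : seq X)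
    (phi : seq X -> \bar R) : \bar R :=
  (Znorm t mu)%:E *
  \sum_(0 <= m <oo) ((m`!%:R)^-1)%:E * ffint m mu (fun xs => phi xs * (t xs)%:E).

Definition ind_zeta (R : realType) (X : Type) (k : nat) (eta : seq X) : \bar R :=
  ((size eta == k)%:R)%:E.

From mathcomp Require Import all_boot all_order all_algebra.
From mathcomp Require Import all_classical all_reals.
From mathcomp Require Import ereal sequences.
From Stdlib Require Import Permutation.
Set Implicit Arguments.
Unset Strict Implicit.
Unset Printing Implicit Defensive.

Import Order.TTheory GRing.Theory Num.Theory.
Local Open Scope ring_scope.

(* Only the (n-1)-th term of the series defining T survives the indicator
   1_{zeta = n-1}, and after cancelling Z_{mu - delta_x} the identity reduces
   to sum_x int g d(mu - delta_x)^{-[k]} = (mu(X) - k) int g dmu^{-[k]} for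
   k = n - 1.  This is proved by induction on k: summing over the removed
   atom commutes with the first integration, as both just pick two distinct
   atoms of mu. *)

Lemma eq_big_In (R : Type) (idx : R) (op : R -> R -> R) (I : Type) (s : seq I)
    (F G : I -> R) :
  (forall i, List.In i s -> F i = G i) ->
  \big[op/idx]_(i <- s) F i = \big[op/idx]_(i <- s) G i.
Proof.
elim: s => [|a s IH] FG; first by rewrite !big_nil.
by rewrite !big_cons FG /=; [rewrite IH // => i si; apply: FG; right | left].
Qed.

Section Picks.
Variable X : Type.

Lemma size_picks_snd (mu : seq X) p :
  List.In p (picks mu) -> size p.2 = (size mu).-1.
Proof.
elim: mu p => [|x s IH] p //= [<- //|/List.in_map_iff [q [<- sq]]] /=.
by rewrite (IH _ sq); case: s {IH} sq.
Qed.

Lemma sum_picks_swap (V : nmodType) (mu : seq X) (F : X -> X -> seq X -> V) :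
  \sum_(p <- picks mu) \sum_(q <- picks p.2) F p.1 q.1 q.2 =
  \sum_(p <- picks mu) \sum_(q <- picks p.2) F q.1 p.1 q.2.
Proof.
elim: mu F => [|x s IH] F /=; first by rewrite !big_nil.
rewrite !big_cons !big_map /=.
under [X in _ + X = _]eq_bigr do rewrite big_cons big_map.
under [X in _ = _ + X]eq_bigr do rewrite big_cons big_map.
rewrite !big_split /= (IH (fun a b r => F a b (x :: r))) !addrA; congr (_ + _).
by rewrite addrC.
Qed.

End Picks.

Local Open Scope ereal_scope.

Lemma eseries_single (R : realType) (f : nat -> \bar R) K :
  (forall k, k != K -> f k = 0) -> \sum_(0 <= k <oo) f k = f K.
Proof.
move=> fK; apply: lim_near_cst => //; exists K.+1 => // N /= KN.
rewrite (big_cat_nat (n := K.+1)) //= big_nat_recr //=.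
rewrite !big1_seq ?add0e ?adde0 // => i; rewrite mem_index_iota /=.
  by move=> /andP[Ki _]; apply: fK; rewrite neq_ltn Ki orbT.
by move=> iK; apply: fK; rewrite neq_ltn iK.
Qed.

Section FallingFactorialIntegral.
Variables (R : realType) (X : Type).
Implicit Types (mu : seq X) (g : seq X -> \bar R).

Lemma eq_ffint m mu g g' :
  (forall xs, size xs = m -> g xs = g' xs) -> ffint m mu g = ffint m mu g'.
Proof.
elim: m mu g g' => [|m IH] mu g g' gg' /=; first exact: gg'.
by apply: eq_bigr => p _; apply: IH => xs xs_m; apply: gg'; rewrite /= xs_m.
Qed.

Lemma ffint_eq0 m mu g :
  (forall xs, size xs = m -> g xs = 0) -> ffint m mu g = 0.
Proof.
move=> g0; rewrite (eq_ffint mu g0).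
by elim: m mu {g0} => [|m IH] mu //=; rewrite big1.
Qed.

Lemma ffint_ge0 m mu g : (forall xs, 0 <= g xs) -> 0 <= ffint m mu g.
Proof.
by elim: m mu g => [|m IH] mu g g0 //=; apply: sume_ge0 => p _; apply: IH.
Qed.

Lemma sum_picks_ffint k mu g :
  (\sum_(p <- picks mu) ffint k p.2 g = ffint k mu g *+ (size mu - k))%R.
Proof.
elim: k mu g => [|k IH] mu g /=.
  rewrite subn0; elim: mu => [|x s IHs]; first by rewrite big_nil.
  by rewrite [picks _]/= big_cons big_map IHs -mulrS.
rewrite (sum_picks_swap mu (fun a b r => ffint k r (fun xs => g (b :: xs)))) /=.
rewrite -sumrMnl; apply: eq_big_In => p /size_picks_snd p2.
by rewrite IH p2 subnS -subn1 subnAC subn1.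
Qed.

End FallingFactorialIntegral.

Lemma Tker_ind_zeta (R : realType) (X : Type) (t : seq X -> R)
    (phi : seq X -> \bar R) k mu :
  Tker t mu (fun eta => phi eta * ind_zeta R k eta) =
  (Znorm t mu)%:E *
  ((k`!%:R^-1)%:E * ffint k mu (fun xs => phi xs * (t xs)%:E)).
Proof.
rewrite /Tker (eseries_single (K := k)) => [|m mk]; last first.
  rewrite ffint_eq0 ?mule0 // => xs xs_m.
  by rewrite /ind_zeta xs_m (negbTE mk) mule0 mul0e.
congr (_ * (_ * _)); apply: eq_ffint => xs xs_k.
by rewrite /ind_zeta xs_k eqxx mule1.
Qed.

Lemma Znorm_neq0 (R : realType) (X : Type) (t : seq X -> R) mu :
  0 < Zinv t mu < +oo -> Znorm t mu != 0%R.
Proof. by move=> Zinv_pos_fin; rewrite invr_eq0 gt_eqF // fine_gt0. Qed.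

Theorem mainTheorem6 (R : realType) (X : Type) (t : seq X -> R)
    (t_ge0 : forall xs, (0 <= t xs)%R)
    (t_sym : forall xs ys, Permutation xs ys -> t xs = t ys)
    (Zinv_pos_fin : forall eta : seq X, 0 < Zinv t eta < +oo)
    (n : nat) (n_ge1 : (1 <= n)%N) (mu : seq X) (mu_n : size mu = n)
    (phi : seq X -> \bar R)
    (phi_ge0 : forall eta, 0 <= phi eta)
    (phi_wd : forall eta eta', Permutation eta eta' -> phi eta = phi eta') :
  Tker t mu (fun eta => phi eta * ind_zeta R n.-1 eta) =
  \sum_(p <- picks mu)
    ((Znorm t mu / Znorm t p.2)%:E *
     Tker t p.2 (fun eta => phi eta * ind_zeta R n.-1 eta)).
Proof.
have g_ge0 xs : 0 <= phi xs * (t xs)%:E by rewrite mule_ge0 // lee_fin.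
have c_ge0 : 0 <= ((n.-1)`!%:R^-1)%:E :> \bar R by rewrite lee_fin invr_ge0.
have n_sub_pred : (n - n.-1 = 1)%N by rewrite -subn1 subKn.
rewrite Tker_ind_zeta.
under eq_bigr do rewrite Tker_ind_zeta muleA -EFinM divfK ?Znorm_neq0 //.
rewrite -ge0_sume_distrr => [|p _]; last by rewrite mule_ge0 ?ffint_ge0.
rewrite -ge0_sume_distrr => [|p _]; last exact: ffint_ge0.
by rewrite sum_picks_ffint mu_n n_sub_pred mulr1n.
Qed.
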